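(* Fix an automaton $i$, a start time $t$, a length $h$ and a canonical transition set $\mathcal C_{i,t,h}$. For any strings $r,r'\in\{0,1\}^h$ with $\tilde S_{i,t,h}(r)=\tilde S_{i,t,h}(r')$ and any state $s_1\in A$, we have $F^h(i,r,s_1,t)=F^h(i,r',s_1,t)$.
   Context: $A$ is the finite state space of a family of automata; $F^h(i,r,s,t)\in A$ is the state that automaton $i$, starting in state $s$ at time $t$, reaches after reading the bits of $r\in\{0,1\}^h$ at times $t,\dots,t+h-1$. For fixed $i,t,h$, $(s_1,s_2)\sim(s_1',s_2')$ means: for all $r\in\{0,1\}^h$, $F^h(i,r,s_1,t)=s_2\iff F^h(i,r,s_1',t)=s_2'$. A canonical transition set is a set $\mathcal C_{i,t,h}\subseteq A\times A$ such that every pair in $A\times A$ is $\sim$-equivalent to some pair of $\mathcal C_{i,t,h}$. The canonical stepping table is $\tilde S_{i,t,h}(r)=\{(s_1,s_2)\in\mathcal C_{i,t,h}:F^h(i,r,s_1,t)=s_2\}$. *)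

From mathcomp Require Import all_boot.
Set Implicit Arguments. Unset Strict Implicit. Unset Printing Implicit Defensive.

(* A family of automata indexed by I with finite state space A.
   delta i b s t = state of automaton i after reading bit b at time t in state s. *)

Fixpoint Fh_seq (I : Type) (A : finType) (delta : I -> bool -> A -> nat -> A)
    (i : I) (r : seq bool) (s : A) (t : nat) : A :=
  match r with
  | [::] => s
  | b :: r' => Fh_seq delta i r' (delta i b s t) t.+1
  end.

Definition Fh (I : Type) (A : finType) (delta : I -> bool -> A -> nat -> A)
    (h : nat) (i : I) (r : h.-tuple bool) (s : A) (t : nat) : A :=
  Fh_seq delta i r s t.
Arguments Fh {I A} delta h i r s t.

Definition trans_equiv (I : Type) (A : finType) (delta : I -> bool -> A -> nat -> A)
    (i : I) (t h : nat) (p q : A * A) : Prop :=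
  forall r : h.-tuple bool,
    (Fh delta h i r p.1 t = p.2) <-> (Fh delta h i r q.1 t = q.2).

Definition canonical_transition_set (I : Type) (A : finType)
    (delta : I -> bool -> A -> nat -> A) (i : I) (t h : nat) (C : {set A * A}) : Prop :=
  forall p : A * A, exists2 q, q \in C & trans_equiv delta i t h p q.

Definition stepping_table (I : Type) (A : finType)
    (delta : I -> bool -> A -> nat -> A) (i : I) (t h : nat) (C : {set A * A})
    (r : h.-tuple bool) : {set A * A} :=
  [set p in C | Fh delta h i r p.1 t == p.2].
Arguments trans_equiv {I A} delta i t h p q.
Arguments canonical_transition_set {I A} delta i t h C.
Arguments stepping_table {I A} delta i t h C r.

From mathcomp Require Import all_boot.

Set Implicit Arguments.
Unset Strict Implicit.

(* Choose a canonical pair q equivalent to (s1, F^h(r, s1)). Then q lies in the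
   table of r, hence in the table of r', and by equivalence F^h(r', s1) is the
   same second component F^h(r, s1). *)

Section SteppingTable.

Variables (I : Type) (A : finType) (delta : I -> bool -> A -> nat -> A).
Variables (i : I) (t h : nat) (C : {set A * A}).

Lemma stepping_table_trans_equiv (p q : A * A) (r : h.-tuple bool) :
  q \in C -> trans_equiv delta i t h p q ->
  q \in stepping_table delta i t h C r <-> Fh delta h i r p.1 t = p.2.
Proof.
move=> qC /(_ r) pq; rewrite inE qC /=.
by split=> [/eqP/pq.2 | /pq.1/eqP].
Qed.

End SteppingTable.

Theorem proposition6p7 (I : Type) (A : finType)
    (delta : I -> bool -> A -> nat -> A) (i : I) (t h : nat) (C : {set A * A}) :
  canonical_transition_set delta i t h C ->
  forall (r r' : h.-tuple bool) (s1 : A),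
    stepping_table delta i t h C r = stepping_table delta i t h C r' ->
    Fh delta h i r s1 t = Fh delta h i r' s1 t.
Proof.
move=> canC r r' s1 eq_table.
have [q qC equiv_q] := canC (s1, Fh delta h i r s1 t).
have : q \in stepping_table delta i t h C r.
  exact/(stepping_table_trans_equiv r qC equiv_q).
rewrite eq_table => /(stepping_table_trans_equiv r' qC equiv_q) /=.
by move->.
Qed.
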